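(* In the adversarial edge arrival model for fractional matchings, no online algorithm achieves a guarantee larger than $0.58884$ on bipartite graphs of maximum degree four. In particular, since $0.58884 < \frac{4}{9-\sqrt5}$, the guarantee $\frac{4}{9-\sqrt5}$ is not achievable on graphs of maximum degree four.
   Context: Adversarial edge arrival model for fractional matchings: edges arrive one at a time in an adversarial order; on arrival of $e$ the algorithm irrevocably assigns $y_e\ge0$ so that for every vertex $w$, $\sum_{f\in\delta(w)}y_f\le 1$ at all times. An algorithm achieves guarantee $\gamma$ if at every timepoint $\sum_e y_e\ge\gamma\,\nu(G_t)$, where $\nu(G_t)$ is the maximum matching cardinality of the graph of arrived edges. *)

From HB Require Import structures.
From mathcomp Require Import all_boot all_order all_algebra.
From mathcomp Require Import reals.
Set Implicit Arguments. Unset Strict Implicit. Unset Printing Implicit Defensive.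
Import Order.TTheory GRing.Theory Num.Theory.
Local Open Scope ring_scope.

(* Bipartite graphs: vertices are left vertices (nat) and right vertices (nat);
   an edge (u, v) joins left vertex u to right vertex v. *)
Definition edge := (nat * nat)%type.

Definition admissible (s : seq edge) : bool :=
  uniq s &&
  all (fun e => (count (fun f : edge => f.1 == e.1) s <= 4)%N &&
                (count (fun f : edge => f.2 == e.2) s <= 4)%N) s.

Definition is_matching (M : seq edge) : bool :=
  uniq (map fst M) && uniq (map snd M).

Definition nu (s : seq edge) : nat :=
  \max_(b : (size s).-tuple bool | is_matching (mask b s)) size (mask b s).

(* A deterministic online algorithm: given the sequence of edges arrived so
   far (the last one being the edge just arriving), it outputs the value y_e
   for the arriving edge. Assignments are therefore irrevocable, and depend
   only on the past. *)
Definition online_alg (R : realType) := seq edge -> R.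

(* Value assigned to the i-th (0-based) arriving edge of s. *)
Definition yval (R : realType) (alg : online_alg R) (s : seq edge) (i : nat) : R :=
  alg (take i.+1 s).

Definition frac_feasible (R : realType) (alg : online_alg R) (p : seq edge) : Prop :=
  (forall i, (i < size p)%N -> 0 <= yval alg p i) /\
  (forall u : nat, \sum_(i < size p | (nth (0, 0)%N p i).1 == u) yval alg p i <= 1) /\
  (forall v : nat, \sum_(i < size p | (nth (0, 0)%N p i).2 == v) yval alg p i <= 1).

Definition frac_value (R : realType) (alg : online_alg R) (p : seq edge) : R :=
  \sum_(i < size p) yval alg p i.

Definition achieves (R : realType) (alg : online_alg R) (gamma : R) : Prop :=
  forall (s : seq edge) (t : nat), admissible s -> (t <= size s)%N ->
    frac_feasible alg (take t s) /\
    gamma * (nu (take t s))%:R <= frac_value alg (take t s).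

(* The algorithm is deterministic, so the value it gives an edge depends only
   on the prefix of the arrival sequence ending with that edge; an adversary
   may therefore present several arrival sequences sharing prefixes, and the
   guarantee γ·ν ≤ Σ y and the vertex constraints Σ y ≤ 1 on all of them
   constrain the same finitely many unknowns y(prefix).  Seven guarantee
   constraints and nine vertex constraints, on graphs of degree at most four
   sharing prefixes, admit small integer weights under which both weighted
   sums have the same coefficient at every prefix.  Adding them up gives
   24 γ ≤ 14, i.e. γ ≤ 7/12 < 0.58884 < 4/(9 - √5). *)

From HB Require Import structures.
From mathcomp Require Import all_boot all_order all_algebra.
From mathcomp Require Import reals.
From mathcomp Require Import lra.
Import Order.TTheory GRing.Theory Num.Theory.
Local Open Scope ring_scope.

Lemma size_mask_le_nu (s : seq edge) (b : seq bool) :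
  size b = size s -> is_matching (mask b s) -> (size (mask b s) <= nu s)%N.
Proof.
move=> /eqP sb Mb; pose t : (size s).-tuple bool := Tuple sb.
exact: (@leq_bigmax_cond _ (fun t : (size s).-tuple bool => is_matching (mask t s))
          (fun t => size (mask t s)) t Mb).
Qed.

(* A weighted formal sum of prefixes, each prefix standing for the value the
   algorithm gives to its last edge. *)
Definition prefix_form := seq (nat * seq edge).

Definition form_coef (l : prefix_form) (p : seq edge) : nat :=
  sumn [seq x.1 | x <- l & x.2 == p].

Definition prefix_terms (w : nat) (s : seq edge) (P : pred nat) : prefix_form :=
  [seq (w, take i.+1 s) | i <- iota 0 (size s) & P i].

Definition incident (left : bool) (v : nat) (e : edge) : bool :=
  (if left then e.1 else e.2) == v.

Lemma form_coef_cons x l p :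
  form_coef (x :: l) p = ((x.2 == p) * x.1 + form_coef l p)%N.
Proof. by rewrite /form_coef /=; case: (x.2 == p); rewrite /= ?mul1n. Qed.

Lemma form_coef_gt0_mem l p : (0 < form_coef l p)%N -> p \in map snd l.
Proof.
elim: l => [|x l IHl] //; rewrite form_coef_cons inE.
by case: eqP => [-> _|_ /IHl ->]; rewrite ?eqxx ?orbT.
Qed.

Section FormValue.
Context {R : realType} (alg : online_alg R).

Definition form_value (l : prefix_form) : R := \sum_(x <- l) x.1%:R * alg x.2.

Lemma form_value_flatten (T : Type) (f : T -> prefix_form) (r : seq T) :
  form_value (flatten (map f r)) = \sum_(t <- r) form_value (f t).
Proof. by rewrite /form_value big_flatten big_map. Qed.

Lemma form_value_coef {l : prefix_form} {K : seq (seq edge)} :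
  uniq K -> {subset map snd l <= K} ->
  form_value l = \sum_(p <- K) (form_coef l p)%:R * alg p.
Proof.
move=> uK; elim: l => [|x l IHl] lK.
  by rewrite /form_value big_nil big1 // => p _; rewrite mul0r.
rewrite /form_value big_cons -/(form_value l) IHl => [|p lp]; last first.
  by apply: lK; rewrite inE lp orbT.
under [RHS]eq_bigr => p _ do rewrite form_coef_cons natrD mulrDl.
rewrite big_split /=; congr (_ + _).
rewrite (bigD1_seq x.2) ?lK ?inE ?eqxx //= mul1n big1 ?addr0 // => p.
by rewrite eq_sym => /negPf ->; rewrite mul0r.
Qed.

Lemma form_value_le (l1 l2 : prefix_form) :
  {in map snd l2, forall p, 0 <= alg p} ->
  all (fun p => form_coef l1 p <= form_coef l2 p)%N (undup (map snd (l1 ++ l2))) ->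
  form_value l1 <= form_value l2.
Proof.
move=> alg_ge0 /allP le12; set K := undup _ in le12.
have uK : uniq K by apply: undup_uniq.
have K1 : {subset map snd l1 <= K} by move=> p lp; rewrite mem_undup map_cat mem_cat lp.
have K2 : {subset map snd l2 <= K}.
  by move=> p lp; rewrite mem_undup map_cat mem_cat lp orbT.
rewrite (form_value_coef uK K1) (form_value_coef uK K2).
rewrite !big_seq; apply: ler_sum => p pK.
have [c2_0|c2_gt0] := posnP (form_coef l2 p).
  by move: (le12 p pK); rewrite c2_0 leqn0 => /eqP ->.
by rewrite ler_wpM2r ?ler_nat ?le12 // alg_ge0 // form_coef_gt0_mem.
Qed.

Lemma form_value_prefix_terms w s P :
  form_value (prefix_terms w s P) = w%:R * \sum_(i < size s | P i) yval alg s i.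
Proof.
rewrite /form_value big_map big_filter mulr_sumr /yval.
by rewrite -(big_mkord P (fun i => w%:R * alg (take i.+1 s))) /index_iota subn0.
Qed.

End FormValue.

(* A guarantee constraint at the end of [vseq], with [mask vmask vseq] a
   matching witnessing a lower bound on [nu]; a vertex constraint at the end
   of [cseq] for the left (if [cleft]) or right vertex [cvertex]. *)
Record value_row := ValueRow { vweight : nat; vseq : seq edge; vmask : seq bool }.
Record capacity_row :=
  CapacityRow { cweight : nat; cseq : seq edge; cleft : bool; cvertex : nat }.

Definition value_row_tuple r := (vweight r, vseq r, vmask r).
Lemma value_row_tupleK :
  cancel value_row_tuple (fun t => ValueRow t.1.1 t.1.2 t.2).
Proof. by case. Qed.
HB.instance Definition _ := Equality.copy value_row (can_type value_row_tupleK).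

Definition capacity_row_tuple r := (cweight r, cseq r, cleft r, cvertex r).
Lemma capacity_row_tupleK :
  cancel capacity_row_tuple (fun t => CapacityRow t.1.1.1 t.1.1.2 t.1.2 t.2).
Proof. by case. Qed.
HB.instance Definition _ :=
  Equality.copy capacity_row (can_type capacity_row_tupleK).

Definition value_form (r : value_row) : prefix_form :=
  prefix_terms (vweight r) (vseq r) predT.

Definition capacity_form (r : capacity_row) : prefix_form :=
  prefix_terms (cweight r) (cseq r)
    (fun i => incident (cleft r) (cvertex r) (nth (0, 0)%N (cseq r) i)).

Definition valid_value_row (r : value_row) : bool :=
  [&& admissible (vseq r), size (vmask r) == size (vseq r)
    & is_matching (mask (vmask r) (vseq r))].

Definition matched_weight (V : seq value_row) : nat :=
  sumn [seq vweight r * size (mask (vmask r) (vseq r)) | r <- V].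

Definition capacity_weight (C : seq capacity_row) : nat := sumn (map cweight C).

Definition dual_certificate (V : seq value_row) (C : seq capacity_row) : bool :=
  let A := flatten (map value_form V) in
  let B := flatten (map capacity_form C) in
  [&& all valid_value_row V, all (fun r => admissible (cseq r)) C
    & all (fun p => form_coef A p <= form_coef B p)%N (undup (map snd (A ++ B)))].

Section Soundness.
Context {R : realType} {alg : online_alg R} {gamma : R}.
Hypothesis alg_gamma : achieves alg gamma.

Lemma achieves_whole {s} : admissible s ->
  frac_feasible alg s /\ gamma * (nu s)%:R <= frac_value alg s.
Proof. by move=> adm; have := alg_gamma s (size s) adm (leqnn _); rewrite take_size. Qed.

Lemma alg_prefix_ge0 s i : admissible s -> (i < size s)%N -> 0 <= alg (take i.+1 s).
Proof. by move=> /achieves_whole[[y_ge0 _] _]; apply: y_ge0. Qed.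

Lemma value_form_lower r : 0 <= gamma -> valid_value_row r ->
  gamma * (vweight r * size (mask (vmask r) (vseq r)))%:R
    <= form_value alg (value_form r).
Proof.
move=> gamma_ge0 /and3P[adm /eqP sb Mb].
rewrite form_value_prefix_terms natrM mulrCA ler_wpM2l // big_mkcond /=.
rewrite -[leRHS]/(frac_value alg (vseq r)).
apply: le_trans; last exact: (achieves_whole adm).2.
by rewrite ler_wpM2l // ler_nat size_mask_le_nu.
Qed.

Lemma capacity_form_upper r : admissible (cseq r) ->
  form_value alg (capacity_form r) <= (cweight r)%:R.
Proof.
move=> /achieves_whole[[_ [le1_left le1_right]] _].
rewrite form_value_prefix_terms -[leRHS]mulr1 ler_wpM2l //.
by rewrite /incident; case: (cleft r); [apply: le1_left | apply: le1_right].
Qed.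

Lemma dual_certificate_sound {V C} : dual_certificate V C ->
  gamma * (matched_weight V)%:R <= (capacity_weight C)%:R.
Proof.
move=> /and3P[/allP validV /allP admC coef_le].
have [gamma_le0|gamma_gt0] := leP gamma 0.
  by apply: le_trans (ler0n _ _); rewrite mulr_le0_ge0.
set A := flatten _ in coef_le; set B := flatten _ in coef_le.
have lowerA : gamma * (matched_weight V)%:R <= form_value alg A.
  rewrite /matched_weight sumnE big_map natr_sum mulr_sumr /A form_value_flatten.
  by rewrite !big_seq; apply: ler_sum => r /validV; apply: value_form_lower; lra.
have upperB : form_value alg B <= (capacity_weight C)%:R.
  rewrite /capacity_weight sumnE big_map natr_sum /B form_value_flatten.
  by rewrite !big_seq; apply: ler_sum => r /admC; apply: capacity_form_upper.
apply: le_trans lowerA (le_trans _ upperB); apply: form_value_le coef_le.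
move=> p /mapP[x /flatten_mapP[r /admC adm]] /mapP[i].
by rewrite mem_filter mem_iota => /and3P[_ _ lt_i] -> ->; apply: alg_prefix_ge0.
Qed.

End Soundness.

Definition adversary_values : seq value_row := [::
  ValueRow 2 [:: (0,0)] [:: true];
  ValueRow 1 [:: (0,0); (0,1); (0,2); (1,0)] [:: false; true; false; true];
  ValueRow 1 [:: (0,0); (0,1); (0,2); (1,0); (1,1); (0,3); (2,0)]
    [:: false; false; true; false; true; false; true];
  ValueRow 1 [:: (0,0); (0,1); (0,2); (1,0); (1,1); (0,3); (2,0); (1,2); (2,1); (3,0)]
    [:: false; false; false; false; false; true; false; true; true; true];
  ValueRow 1 [:: (0,0); (0,1); (0,2); (1,0); (1,1); (0,3); (2,0); (1,2); (2,1); (3,1);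
                 (1,4); (2,2); (2,5); (4,0); (5,2)]
    [:: false; false; false; false; false; true; false; false; false; true;
        true; false; true; true; true];
  ValueRow 1 [:: (0,0); (0,1); (0,2); (1,0); (1,1); (0,3); (2,0); (1,2); (2,1); (3,1);
                 (1,4); (2,2); (4,0)]
    [:: false; false; false; false; false; true; false; false; false; true;
        true; true; true];
  ValueRow 1 [:: (0,0); (0,1); (1,0)] [:: false; true; true]].

Definition adversary_capacities : seq capacity_row := [::
  CapacityRow 4 [:: (0,0); (0,1); (0,2); (1,0); (1,1); (0,3); (2,0); (1,2); (1,4);
                    (2,2); (2,1); (3,0); (4,1)] true 0;
  CapacityRow 1 [:: (0,0); (0,1); (0,2); (1,0); (1,1); (0,3); (2,0); (1,2); (2,1);
                    (3,0); (1,3); (2,2); (2,4); (4,1)] false 0;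
  CapacityRow 2 [:: (0,0); (0,1); (0,2); (1,0); (1,1); (0,3); (2,0); (1,2); (2,1);
                    (3,1); (1,3); (2,4); (4,0)] false 1;
  CapacityRow 1 [:: (0,0); (0,1); (0,2); (1,0); (1,1); (0,3); (2,0); (1,2); (2,1);
                    (3,1); (1,4); (2,2); (2,5); (4,0); (5,2)] true 2;
  CapacityRow 1 [:: (0,0); (0,1); (0,2); (1,0); (1,1); (0,3); (2,0); (1,2); (2,1);
                    (3,1); (1,4); (2,2); (2,5); (4,0); (5,2)] false 0;
  CapacityRow 1 [:: (0,0); (0,1); (0,2); (1,0); (1,1); (0,3); (2,0); (1,2); (2,1);
                    (3,1); (1,4); (2,2); (2,5); (4,0); (5,2)] false 2;
  CapacityRow 2 [:: (0,0); (0,1); (0,2); (1,0); (1,1); (0,3); (2,0); (1,2); (2,1);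
                    (3,1); (1,4); (2,2); (4,0)] true 1;
  CapacityRow 1 [:: (0,0); (0,1); (0,2); (1,0); (1,1); (0,3); (2,0); (1,2); (2,1);
                    (3,1); (1,4); (2,2); (4,0)] false 0;
  CapacityRow 1 [:: (0,0); (0,1); (1,0)] false 0].

Lemma adversary_dual_certificate :
  dual_certificate adversary_values adversary_capacities.
Proof. by vm_compute. Qed.

Lemma achieves_le_seven_twelfths (R : realType) (alg : online_alg R) (gamma : R) :
  achieves alg gamma -> gamma <= 7%:R / 12%:R.
Proof.
move=> alg_gamma.
have := dual_certificate_sound alg_gamma adversary_dual_certificate.
have -> : matched_weight adversary_values = 24%N by [].
have -> : capacity_weight adversary_capacities = 14%N by [].
by move=> bound; rewrite ler_pdivlMr ?ltr0n //; lra.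
Qed.

Lemma seven_twelfths_lt_4_over_9_sub_sqrt5 (R : rcfType) :
  7%:R / 12%:R < 4%:R / (9%:R - Num.sqrt 5%:R) :> R.
Proof.
set r := Num.sqrt 5%:R.
have r_ge0 : 0 <= r by apply: sqrtr_ge0.
have r_sq : r * r = 5%:R by rewrite -expr2 sqr_sqrtr // ler0n.
have r_gt : 15%:R / 7%:R < r by nra.
have r_lt : r < 3%:R by nra.
by rewrite ltr_pdivlMr; lra.
Qed.

Theorem mainTheorem3 (R : realType) :
  (forall (alg : online_alg R) (gamma : R),
      achieves alg gamma -> gamma <= 58884%:R / 100000%:R) /\
  (forall alg : online_alg R,
      ~ achieves alg (4%:R / (9%:R - Num.sqrt 5%:R))).
Proof.
split=> [alg gamma /achieves_le_seven_twelfths | alg /achieves_le_seven_twelfths].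
  by move=> /le_trans; apply; lra.
by apply/negP; rewrite -ltNge seven_twelfths_lt_4_over_9_sub_sqrt5.
Qed.
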